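(* Let $R$ be a ring. If the factor ring $R/J(R)$ is NJ-symmetric, then $R$ is NJ-symmetric.
   Context: Rings are associative with identity. $N(R)$ is the set of nilpotent elements, $J(R)$ the Jacobson radical. $R$ is NJ-symmetric if for all $a,b,c\in R$, $abc\in N(R)$ implies $bac\in J(R)$. *)

From HB Require Import structures.
From mathcomp Require Import all_boot all_order all_algebra.
Set Implicit Arguments. Unset Strict Implicit. Unset Printing Implicit Defensive.
Import GRing.Theory.
Local Open Scope ring_scope.

(* Rings: associative with identity, not necessarily commutative
   (pzRingType also allows the zero ring). *)

Definition nilpotent_el (R : pzRingType) (x : R) : Prop := exists n : nat, x ^+ n = 0.

Definition left_ideal (R : pzRingType) (I : R -> Prop) : Prop :=
  [/\ I 0, (forall x y, I x -> I y -> I (x + y)) & (forall r x, I x -> I (r * x))].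

Definition maximal_left_ideal (R : pzRingType) (M : R -> Prop) : Prop :=
  [/\ left_ideal M, ~ M 1 &
      forall K : R -> Prop, left_ideal K -> ~ K 1 -> (forall x, M x -> K x) ->
        forall x, K x -> M x].

Definition jacobson (R : pzRingType) (x : R) : Prop :=
  forall M : R -> Prop, maximal_left_ideal M -> M x.

Definition NJ_symmetric (R : pzRingType) : Prop :=
  forall a b c : R, nilpotent_el (a * b * c) -> jacobson (b * a * c).

From HB Require Import structures.
From mathcomp Require Import all_boot all_order all_algebra.
Local Open Scope ring_scope.
Import GRing.Theory.

(* Every maximal left ideal M of R contains J(R), hence the kernel of f, so
   its image under the surjection f is a maximal left ideal of S whose
   preimage is M again.  Thus f x in J(S) forces x in J(R).  As f also
   preserves nilpotence, abc in N(R) gives f(a)f(b)f(c) in N(S), hence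
   f(bac) in J(S) and bac in J(R). *)

Lemma nilpotent_el_rmorph (R S : pzRingType) (f : {rmorphism R -> S}) (x : R) :
  nilpotent_el x -> nilpotent_el (f x).
Proof. by case=> n xn0; exists n; rewrite -rmorphXn xn0 rmorph0. Qed.

Lemma left_ideal_preim (R S : pzRingType) (f : {rmorphism R -> S})
    (K : S -> Prop) :
  left_ideal K -> left_ideal (fun x => K (f x)).
Proof.
case=> K0 KD KM; split=> [|x y Kx Ky|r x Kx]; first by rewrite rmorph0.
- by rewrite rmorphD; apply: KD.
- by rewrite rmorphM; apply: KM.
Qed.

Section SurjectiveImage.

Variables (R S : pzRingType) (f : {rmorphism R -> S}).
Hypothesis f_surj : forall y : S, exists x : R, f x = y.

Definition image_pred (M : R -> Prop) (y : S) : Prop := exists2 m, M m & f m = y.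

Lemma left_ideal_image (M : R -> Prop) :
  left_ideal M -> left_ideal (image_pred M).
Proof.
case=> M0 MD MM; split.
- by exists 0; rewrite ?rmorph0.
- move=> _ _ [m1 Mm1 <-] [m2 Mm2 <-].
  by exists (m1 + m2); [apply: MD | rewrite rmorphD].
- move=> r _ [m Mm <-]; have [r' <-] := f_surj r.
  by exists (r' * m); [apply: MM | rewrite rmorphM].
Qed.

Lemma image_predK {M : R -> Prop} {x : R} :
  left_ideal M -> (forall z, f z = 0 -> M z) -> image_pred M (f x) -> M x.
Proof.
case=> _ MD _ kerf_sub [m Mm fm_fx].
have Mxm : M (x - m) by apply: kerf_sub; rewrite rmorphB fm_fx subrr.
by have := MD _ _ Mxm Mm; rewrite subrK.
Qed.

Lemma maximal_left_ideal_image (M : R -> Prop) :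
  (forall x, f x = 0 -> M x) ->
  maximal_left_ideal M -> maximal_left_ideal (image_pred M).
Proof.
move=> kerf_sub [Mideal M1 Mmax]; split; first exact: left_ideal_image.
  by rewrite -(rmorph1 f) => /(image_predK Mideal kerf_sub).
move=> K Kideal K1 MK y Ky; have [x fx_y] := f_surj y.
exists x => //; apply: (Mmax (fun z => K (f z))) => [||z Mz|].
- exact: left_ideal_preim.
- by rewrite rmorph1.
- by apply: MK; exists z.
- by rewrite fx_y.
Qed.

Hypothesis kerf_jacobson : forall x : R, f x = 0 -> jacobson x.

Lemma jacobson_of_rmorph (x : R) : jacobson (f x) -> jacobson x.
Proof.
move=> Jfx M Mmax.
have kerf_sub z : f z = 0 -> M z by move=> /kerf_jacobson; apply.
case: (Mmax) => Mideal _ _; apply: (image_predK Mideal kerf_sub).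
by apply: Jfx; apply: maximal_left_ideal_image.
Qed.

Lemma NJ_symmetric_of_rmorph : NJ_symmetric S -> NJ_symmetric R.
Proof.
move=> NJS a b c abc_nil; apply: jacobson_of_rmorph; rewrite !rmorphM.
by apply: NJS; rewrite -!rmorphM; apply: nilpotent_el_rmorph.
Qed.

End SurjectiveImage.

Theorem theorem2p14 (R S : pzRingType) (f : {rmorphism R -> S}) :
  (forall y : S, exists x : R, f x = y) ->
  (forall x : R, f x = 0 <-> jacobson x) ->
  NJ_symmetric S -> NJ_symmetric R.
Proof.
move=> f_surj kerfE.
by apply: NJ_symmetric_of_rmorph => // x /kerfE.
Qed.
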